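(* For $A\in\{D,C\}$ and all $\sigma,\tau\in\Lambda^r_A$: $\sigma\le^r_A\tau$ if and only if $\sigma\le_A\tau$. That is, $\le^r_D$ and $\le^r_C$ are the restrictions to the restricted types of $\le_D$ and $\le_C$.
   Context: Let $R=\{\bot\sqsubset\top\}$ be the two-point lattice, and write $\psi$ for the type constant $\psi_\top$. Full types: - $\Lambda_R$: $\rho::=\psi_a\mid\omega\mid\rho\wedge\rho$ ($a\in R$); - $\Lambda_D$: $\delta::=\rho\mid\kappa\to\rho\mid\omega\mid\delta\wedge\delta$; - $\Lambda_C$: $\kappa::=\delta\times\kappa\mid\omega\mid\kappa\wedge\kappa$. The relations $\le_R,\le_D,\le_C$ are the least reflexive, transitive relations with $\sigma\wedge\tau\le\sigma,\tau$, $\sigma\le\omega$, $\rho\le\sigma,\tau\Rightarrow\rho\le\sigma\wedge\tau$, and additionally: - $\psi_\bot\sim\omega$ and $\psi_{a\sqcup b}\sim\psi_a\wedge\psi_b$; - $\le_R\subseteq\le_D$; - $\omega\le_D\omega\to\omega$; - $\psi_a\le_D\omega\to\psi_a\le_D\psi_a$; - $\omega\le_C\omega\times\omega$; - $(\kappa\to\rho_1)\wedge(\kappa\to\rho_2)\le_D\kappa\to(\rho_1\wedge\rho_2)$; - $(\delta_1\times\kappa_1)\wedge(\delta_2\times\kappa_2)\le_C(\delta_1\wedge\delta_2)\times(\kappa_1\wedge\kappa_2)$; - if $\kappa_2\le_C\kappa_1$ and $\rho_1\le_R\rho_2$ then $\kappa_1\to\rho_1\le_D\kappa_2\to\rho_2$;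 - $\times$ is covariant in both arguments. Restricted types: $\Lambda^r_D$: $\delta::=\kappa\to\psi\mid\delta\wedge\delta$; $\Lambda^r_C$: $\kappa::=\omega\mid\delta\times\kappa\mid\kappa\wedge\kappa$. Thus $\Lambda^r_A\subseteq\Lambda_A$. $\le^r_D$ and $\le^r_C$ are the least relations on $\Lambda^r_D$ and $\Lambda^r_C$ that are reflexive and transitive, satisfy $\sigma\wedge\tau\le\sigma$, $\sigma\wedge\tau\le\tau$, and $\sigma\le\tau_1,\tau_2\Rightarrow\sigma\le\tau_1\wedge\tau_2$, and in addition: - $\kappa\le^r_C\omega$; - $(\delta_1\times\kappa_1)\wedge(\delta_2\times\kappa_2)\le^r_C(\delta_1\wedge\delta_2)\times(\kappa_1\wedge\kappa_2)$; - if $\delta_1\le^r_D\delta_2$ and $\kappa_1\le^r_C\kappa_2$ then $\delta_1\times\kappa_1\le^r_C\delta_2\times\kappa_2$; - if $\kappa_2\le^r_C\kappa_1$ then $\kappa_1\to\psi\le^r_D\kappa_2\to\psi$. *)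

(* The two-point lattice R = {bot ⊑ top} is represented by bool:
   false = ⊥, true = ⊤, join = orb. *)

Inductive tyR : Type :=
| RPsi : bool -> tyR
| ROm : tyR
| RAnd : tyR -> tyR -> tyR.

Inductive tyD : Type :=
| DR : tyR -> tyD
| DArr : tyC -> tyR -> tyD
| DOm : tyD
| DAnd : tyD -> tyD -> tyD
with tyC : Type :=
| CProd : tyD -> tyC -> tyC
| COm : tyC
| CAnd : tyC -> tyC -> tyC.

Definition psi : tyR := RPsi true.

Inductive leR : tyR -> tyR -> Prop :=
| leR_refl : forall r, leR r r
| leR_trans : forall r1 r2 r3, leR r1 r2 -> leR r2 r3 -> leR r1 r3
| leR_andl : forall r1 r2, leR (RAnd r1 r2) r1
| leR_andr : forall r1 r2, leR (RAnd r1 r2) r2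
| leR_om : forall r, leR r ROm
| leR_glb : forall r r1 r2, leR r r1 -> leR r r2 -> leR r (RAnd r1 r2)
| leR_bot_om : leR (RPsi false) ROm
| leR_om_bot : leR ROm (RPsi false)
| leR_join_and : forall a b, leR (RPsi (orb a b)) (RAnd (RPsi a) (RPsi b))
| leR_and_join : forall a b, leR (RAnd (RPsi a) (RPsi b)) (RPsi (orb a b)).

Inductive leD : tyD -> tyD -> Prop :=
| leD_refl : forall d, leD d d
| leD_trans : forall d1 d2 d3, leD d1 d2 -> leD d2 d3 -> leD d1 d3
| leD_andl : forall d1 d2, leD (DAnd d1 d2) d1
| leD_andr : forall d1 d2, leD (DAnd d1 d2) d2
| leD_om : forall d, leD d DOm
| leD_glb : forall d d1 d2, leD d d1 -> leD d d2 -> leD d (DAnd d1 d2)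
| leD_R : forall r1 r2, leR r1 r2 -> leD (DR r1) (DR r2)
| leD_om_arr : leD DOm (DArr COm ROm)
| leD_psi_arr : forall a, leD (DR (RPsi a)) (DArr COm (RPsi a))
| leD_arr_psi : forall a, leD (DArr COm (RPsi a)) (DR (RPsi a))
| leD_arr_and : forall k r1 r2,
    leD (DAnd (DArr k r1) (DArr k r2)) (DArr k (RAnd r1 r2))
| leD_arr : forall k1 k2 r1 r2, leC k2 k1 -> leR r1 r2 ->
    leD (DArr k1 r1) (DArr k2 r2)
with leC : tyC -> tyC -> Prop :=
| leC_refl : forall k, leC k k
| leC_trans : forall k1 k2 k3, leC k1 k2 -> leC k2 k3 -> leC k1 k3
| leC_andl : forall k1 k2, leC (CAnd k1 k2) k1
| leC_andr : forall k1 k2, leC (CAnd k1 k2) k2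
| leC_om : forall k, leC k COm
| leC_glb : forall k k1 k2, leC k k1 -> leC k k2 -> leC k (CAnd k1 k2)
| leC_om_prod : leC COm (CProd DOm COm)
| leC_prod_and : forall d1 d2 k1 k2,
    leC (CAnd (CProd d1 k1) (CProd d2 k2)) (CProd (DAnd d1 d2) (CAnd k1 k2))
| leC_prod : forall d1 d2 k1 k2, leD d1 d2 -> leC k1 k2 ->
    leC (CProd d1 k1) (CProd d2 k2).

Inductive tyDr : Type :=
| DrArr : tyCr -> tyDr            (* kappa -> psi *)
| DrAnd : tyDr -> tyDr -> tyDr
with tyCr : Type :=
| CrOm : tyCr
| CrProd : tyDr -> tyCr -> tyCr
| CrAnd : tyCr -> tyCr -> tyCr.

Fixpoint embD (d : tyDr) : tyD :=
  match d with
  | DrArr k => DArr (embC k) psi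
  | DrAnd d1 d2 => DAnd (embD d1) (embD d2)
  end
with embC (k : tyCr) : tyC :=
  match k with
  | CrOm => COm
  | CrProd d k => CProd (embD d) (embC k)
  | CrAnd k1 k2 => CAnd (embC k1) (embC k2)
  end.

Inductive leDr : tyDr -> tyDr -> Prop :=
| leDr_refl : forall d, leDr d d
| leDr_trans : forall d1 d2 d3, leDr d1 d2 -> leDr d2 d3 -> leDr d1 d3
| leDr_andl : forall d1 d2, leDr (DrAnd d1 d2) d1
| leDr_andr : forall d1 d2, leDr (DrAnd d1 d2) d2
| leDr_glb : forall d d1 d2, leDr d d1 -> leDr d d2 -> leDr d (DrAnd d1 d2)
| leDr_arr : forall k1 k2, leCr k2 k1 -> leDr (DrArr k1) (DrArr k2)
with leCr : tyCr -> tyCr -> Prop :=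
| leCr_refl : forall k, leCr k k
| leCr_trans : forall k1 k2 k3, leCr k1 k2 -> leCr k2 k3 -> leCr k1 k3
| leCr_andl : forall k1 k2, leCr (CrAnd k1 k2) k1
| leCr_andr : forall k1 k2, leCr (CrAnd k1 k2) k2
| leCr_glb : forall k k1 k2, leCr k k1 -> leCr k k2 -> leCr k (CrAnd k1 k2)
| leCr_om : forall k, leCr k CrOm
| leCr_prod_and : forall d1 d2 k1 k2,
    leCr (CrAnd (CrProd d1 k1) (CrProd d2 k2)) (CrProd (DrAnd d1 d2) (CrAnd k1 k2))
| leCr_prod : forall d1 d2 k1 k2, leDr d1 d2 -> leCr k1 k2 ->
    leCr (CrProd d1 k1) (CrProd d2 k2).

(* For
   completeness, read a full type as a property of restricted types: a full
   D-type as a property of restricted D-types extended with a top element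
   (needed because [omega] has no restricted counterpart), a full C-type as a
   property of restricted C-types, where a restricted C-type is split into the
   meet of its heads and the intersection of its tails.  This reading is
   monotone for [<=_D] and [<=_C], and the reading of an embedded restricted
   type is exactly its principal down-set for [<=^r]; hence [emb s <= emb t]
   forces [s] into the down-set of [t]. *)

From Stdlib Require Import Bool Setoid.

Scheme leD_mut := Induction for leD Sort Prop
with leC_mut := Induction for leC Sort Prop.
Combined Scheme leD_leC_mut from leD_mut, leC_mut.

Scheme leDr_mut := Induction for leDr Sort Prop
with leCr_mut := Induction for leCr Sort Prop.
Combined Scheme leDr_leCr_mut from leDr_mut, leCr_mut.

Scheme tyDr_mut := Induction for tyDr Sort Prop
with tyCr_mut := Induction for tyCr Sort Prop.
Combined Scheme tyDr_tyCr_mut from tyDr_mut, tyCr_mut.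

Lemma leDr_leCr_emb :
  (forall s t, leDr s t -> leD (embD s) (embD t)) /\
  (forall k k', leCr k k' -> leC (embC k) (embC k')).
Proof.
  apply leDr_leCr_mut; simpl; intros; eauto using leD, leC, leR.
Qed.

(* Every [r : tyR] is equivalent to [RPsi (valR r)]. *)
Fixpoint valR (r : tyR) : bool :=
  match r with
  | RPsi a => a
  | ROm => false
  | RAnd r1 r2 => valR r1 || valR r2
  end.

Lemma leR_valR r1 r2 : leR r1 r2 -> valR r2 = true -> valR r1 = true.
Proof.
  induction 1; simpl; intros Hv; auto; try discriminate.
  - rewrite Hv; reflexivity.
  - rewrite Hv; apply orb_true_r.
  - apply orb_true_iff in Hv as [Hv | Hv]; auto.
Qed.

Definition leO (o o' : option tyDr) : Prop :=
  match o, o' with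
  | _, None => True
  | Some s, Some s' => leDr s s'
  | None, Some _ => False
  end.

Definition meetO (o1 o2 : option tyDr) : option tyDr :=
  match o1, o2 with
  | Some s1, Some s2 => Some (DrAnd s1 s2)
  | Some s, None | None, Some s => Some s
  | None, None => None
  end.

Lemma leO_refl o : leO o o.
Proof. destruct o; simpl; auto using leDr_refl. Qed.

Lemma leO_trans o1 o2 o3 : leO o1 o2 -> leO o2 o3 -> leO o1 o3.
Proof.
  destruct o1, o2, o3; simpl; intros; eauto using leDr_trans; contradiction.
Qed.

Lemma leO_meetOl o1 o2 : leO (meetO o1 o2) o1.
Proof. destruct o1, o2; simpl; auto using leDr_refl, leDr_andl. Qed.

Lemma leO_meetOr o1 o2 : leO (meetO o1 o2) o2.
Proof. destruct o1, o2; simpl; auto using leDr_refl, leDr_andr. Qed.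

Lemma leO_meetO o o1 o2 : leO o o1 -> leO o o2 -> leO o (meetO o1 o2).
Proof. destruct o, o1, o2; simpl; auto using leDr_glb. Qed.

Lemma leO_DrAnd o s1 s2 :
  leO o (Some (DrAnd s1 s2)) <-> leO o (Some s1) /\ leO o (Some s2).
Proof.
  destruct o as [s |]; simpl; [| tauto].
  split.
  - intro H; split; eapply leDr_trans; eauto using leDr_andl, leDr_andr.
  - intros [H1 H2]; apply leDr_glb; assumption.
Qed.

Fixpoint headC (k : tyCr) : option tyDr :=
  match k with
  | CrOm => None
  | CrProd s _ => Some s
  | CrAnd k1 k2 => meetO (headC k1) (headC k2)
  end.

Fixpoint tailC (k : tyCr) : tyCr :=
  match k with
  | CrOm => CrOm
  | CrProd _ k' => k'
  | CrAnd k1 k2 => CrAnd (tailC k1) (tailC k2)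
  end.

Lemma leCr_headC_tailC k k' :
  leCr k k' -> leO (headC k) (headC k') /\ leCr (tailC k) (tailC k').
Proof.
  induction 1; simpl.
  - split; [apply leO_refl | apply leCr_refl].
  - destruct IHleCr1, IHleCr2; split; eauto using leO_trans, leCr_trans.
  - split; [apply leO_meetOl | apply leCr_andl].
  - split; [apply leO_meetOr | apply leCr_andr].
  - destruct IHleCr1, IHleCr2; split; auto using leO_meetO, leCr_glb.
  - split; [destruct (headC k); exact I | apply leCr_om].
  - split; [apply leDr_refl | apply leCr_refl].
  - split; assumption.
Qed.

Lemma headC_None_tailC k : headC k = None -> leCr CrOm (tailC k).
Proof.
  induction k as [| s k' _ | k1 IH1 k2 IH2]; simpl; intro Hk.
  - apply leCr_refl.
  - discriminate.
  - destruct (headC k1), (headC k2); try discriminate.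
    apply leCr_glb; auto.
Qed.

Lemma headC_Some k s : headC k = Some s -> leCr k (CrProd s (tailC k)).
Proof.
  revert s; induction k as [| s' k' _ | k1 IH1 k2 IH2]; simpl; intros s Hk.
  - discriminate.
  - injection Hk as <-; apply leCr_refl.
  - destruct (headC k1) as [s1 |] eqn:E1, (headC k2) as [s2 |] eqn:E2;
      simpl in Hk; try discriminate; injection Hk as <-.
    + eapply leCr_trans; [| apply leCr_prod_and].
      apply leCr_glb.
      * eapply leCr_trans; [apply leCr_andl | apply IH1; reflexivity].
      * eapply leCr_trans; [apply leCr_andr | apply IH2; reflexivity].
    + eapply leCr_trans; [apply leCr_andl |].
      eapply leCr_trans; [apply IH1; reflexivity |].
      apply leCr_prod; [apply leDr_refl |].
      apply leCr_glb; [apply leCr_refl |].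
      eapply leCr_trans; [apply leCr_om | apply headC_None_tailC; assumption].
    + eapply leCr_trans; [apply leCr_andr |].
      eapply leCr_trans; [apply IH2; reflexivity |].
      apply leCr_prod; [apply leDr_refl |].
      apply leCr_glb; [| apply leCr_refl].
      eapply leCr_trans; [apply leCr_om | apply headC_None_tailC; assumption].
Qed.

Lemma leCr_CrProd k0 s k :
  leCr k0 (CrProd s k) <-> leO (headC k0) (Some s) /\ leCr (tailC k0) k.
Proof.
  split.
  - apply leCr_headC_tailC.
  - intros [Hs Hk].
    destruct (headC k0) as [s0 |] eqn:E; [| contradiction].
    eapply leCr_trans; [apply headC_Some, E |].
    apply leCr_prod; assumption.
Qed.

(* [psi] is read as [omega -> psi], and an arrow [c -> psi] holds at [o] when
   [o <= k -> psi] for some upper bound [k] of the reading of [c]. *)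
Fixpoint semD (d : tyD) (o : option tyDr) {struct d} : Prop :=
  match d with
  | DR r => valR r = true -> leO o (Some (DrArr CrOm))
  | DArr c r => valR r = true ->
      exists k, leO o (Some (DrArr k)) /\ forall k0, semC c k0 -> leCr k0 k
  | DOm => True
  | DAnd d1 d2 => semD d1 o /\ semD d2 o
  end
with semC (c : tyC) (k : tyCr) {struct c} : Prop :=
  match c with
  | CProd d c' => semD d (headC k) /\ semC c' (tailC k)
  | COm => True
  | CAnd c1 c2 => semC c1 k /\ semC c2 k
  end.

Lemma leD_leC_sem :
  (forall d d', leD d d' -> forall o, semD d o -> semD d' o) /\
  (forall c c', leC c c' -> forall k, semC c k -> semC c' k).
Proof.
  apply leD_leC_mut; simpl;
    try solve [intros; discriminate | intros; firstorder].
  - intros r1 r2 Hr o H Hv; exact (H (leR_valR _ _ Hr Hv)).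
  - intros a o H Ha; exists CrOm; split; [exact (H Ha) | intros; apply leCr_om].
  - intros a o H Ha; destruct (H Ha) as [k [Hk Hbound]].
    eapply leO_trans; [exact Hk |].
    apply leDr_arr, Hbound; exact I.
  - intros k r1 r2 o [H1 H2] Hv.
    apply orb_true_iff in Hv as [Hv | Hv]; auto.
  - intros k1 k2 r1 r2 _ Hk Hr o H Hv.
    destruct (H (leR_valR _ _ Hr Hv)) as [k [Hk0 Hbound]].
    exists k; auto.
Qed.

Lemma sem_emb :
  (forall s o, semD (embD s) o <-> leO o (Some s)) /\
  (forall k k0, semC (embC k) k0 <-> leCr k0 k).
Proof.
  apply tyDr_tyCr_mut; simpl.
  - intros t IHt o; split.
    + intro H; destruct (H eq_refl) as [k [Hk Hbound]].
      eapply leO_trans; [exact Hk |].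
      apply leDr_arr, Hbound, IHt, leCr_refl.
    + intros Ht _; exists t; split; [exact Ht |].
      intro k0; apply IHt.
  - intros s1 IH1 s2 IH2 o.
    rewrite leO_DrAnd, IH1, IH2; reflexivity.
  - intro k0; split; auto using leCr_om.
  - intros s IHs k IHk k0.
    rewrite leCr_CrProd, IHs, IHk; reflexivity.
  - intros k1 IH1 k2 IH2 k0.
    rewrite IH1, IH2; split.
    + intros [H1 H2]; apply leCr_glb; assumption.
    + intro H; split; eapply leCr_trans; eauto using leCr_andl, leCr_andr.
Qed.

Theorem theorem6p3 :
  (forall s t : tyDr, leDr s t <-> leD (embD s) (embD t)) /\
  (forall s t : tyCr, leCr s t <-> leC (embC s) (embC t)).
Proof.
  destruct leDr_leCr_emb as [embD_mono embC_mono].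
  destruct leD_leC_sem as [semD_mono semC_mono].
  destruct sem_emb as [semD_embD semC_embC].
  split; intros s t; split; auto; intro Hst.
  - apply (semD_embD t (Some s)), (semD_mono _ _ Hst), semD_embD, leDr_refl.
  - apply (semC_embC t s), (semC_mono _ _ Hst), semC_embC, leCr_refl.
Qed.
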